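(* Let $n,s,t\in\mathbb{N}$ with $1\le s\le t\le n$, and assume $t\ge 2s$ and $s\ge n-t$. Then the number $\mathcal{M}(n,s,t)$ of monochromatic Schur triples on $\{1,\dots,n\}$ under the coloring $R^sB^{t-s}R^{n-t}$ is \[ \mathcal{M}(n,s,t)=\frac{s(s-1)}{2}+\frac{(t-2s)(t-2s-1)}{2}+(n-t)(n-t-1). \]
   Context: A Schur triple on $[n]=\{1,\dots,n\}$ is an ordered triple $(x,y,z)\in[n]^3$ with $z=x+y$ (so $(x,y,x+y)$ and $(y,x,x+y)$ are distinct if $x\ne y$); it is monochromatic under a coloring $\chi$ of $[n]$ if $\chi(x)=\chi(y)=\chi(z)$. The coloring $R^sB^{t-s}R^{n-t}$ colors $1,\dots,s$ red, $s+1,\dots,t$ blue, and $t+1,\dots,n$ red. *)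

From mathcomp Require Import all_boot.
Set Implicit Arguments. Unset Strict Implicit. Unset Printing Implicit Defensive.

(* A 2-colouring of the integers: true = red, false = blue. *)
Definition RBR_col (s t : nat) (x : nat) : bool := (x <= s) || (t < x).

Definition num_mono_schur (n : nat) (chi : nat -> bool) : nat :=
  #|[set p : 'I_n.+1 * 'I_n.+1 |
      [&& 1 <= p.1, 1 <= p.2, p.1 + p.2 <= n,
          chi p.1 == chi p.2 & chi p.2 == chi (p.1 + p.2)]]|.

Definition M_nst (n s t : nat) : nat := num_mono_schur n (RBR_col s t).

From mathcomp Require Import all_boot zify.

(* Under 2s <= t and n - t <= s, the monochromatic triples (x, y, x + y) are
   exactly the lattice points of four disjoint triangles
   {a < x, b < y, x + y <= c}: all-red ones with x + y <= s (a red pair with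
   s < x + y would have x + y <= 2s <= t, hence blue), all-blue ones inside
   (s, t], and red ones with one summand above t (then the other is below
   n - t <= s, and two summands above t cannot fit below n <= 2t).  Such a
   triangle has 'C(c - a - b, 2) points, which gives
   'C(s, 2) + 'C(t - 2s, 2) + 2 'C(n - t, 2). *)

Lemma sum_itv_indicator (a c N : nat) :
  \sum_(0 <= y < N) ((a < y) && (y <= c)) = minn c N.-1 - a.
Proof.
elim: N => [|[|N] IH]; first by rewrite big_geq.
- by rewrite big_nat1 ltn0 minn0.
- rewrite big_nat_recr //= IH; case: (ltnP a N.+1); case: (leqP N.+1 c) => /=; lia.
Qed.

Lemma sum_staircase (a m N : nat) : a + m <= N ->
  \sum_(0 <= x < N) (a < x) * (a + m - x) = 'C(m, 2).
Proof.
elim: m => [|m IH] le_amN.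
  by rewrite bin_small // big1 // => x _; rewrite addn0; case: ltnP => //; lia.
have step x : (a < x) * (a + m.+1 - x)
              = (a < x) * (a + m - x) + ((a < x) && (x <= a + m)).
  by case: ltnP => /= ?; [case: leqP => /= ? | ]; lia.
rewrite (eq_bigr _ (fun x _ => step x)) big_split /= IH; last lia.
rewrite sum_itv_indicator binS bin1; lia.
Qed.

Lemma count_triangle (a b c N : nat) : a + b <= c -> c - a <= N -> c - b <= N ->
  \sum_(0 <= x < N) \sum_(0 <= y < N) [&& a < x, b < y & x + y <= c]
  = 'C(c - (a + b), 2).
Proof.
move=> le_abc le_caN le_cbN.
have row x : \sum_(0 <= y < N) [&& a < x, b < y & x + y <= c]
             = (a < x) * (a + (c - (a + b)) - x).
  case: (ltnP a x) => /= lt_ax; last by rewrite big1.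
  rewrite (eq_bigr (fun y => nat_of_bool ((b < y) && (y <= c - x)))) => [|y _].
    by rewrite sum_itv_indicator; lia.
  by case: (ltnP b y) => //= lt_by; lia.
rewrite (eq_bigr _ (fun x _ => row x)) sum_staircase //; lia.
Qed.

Lemma card_pairs_sum (n : nat) (P : nat -> nat -> bool) :
  #|[set p : 'I_n.+1 * 'I_n.+1 | P p.1 p.2]|
  = \sum_(0 <= x < n.+1) \sum_(0 <= y < n.+1) P x y.
Proof.
rewrite cardsE -sum1_card big_mkcond /=.
rewrite -(pair_big xpredT xpredT (fun i j : 'I_n.+1 => nat_of_bool (P i j))) /=.
rewrite big_mkord; by apply: eq_bigr => i _; rewrite big_mkord.
Qed.

Lemma num_mono_schur_sum (n : nat) (chi : nat -> bool) :
  num_mono_schur n chi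
  = \sum_(0 <= x < n.+1) \sum_(0 <= y < n.+1)
      [&& 1 <= x, 1 <= y, x + y <= n, chi x == chi y & chi y == chi (x + y)].
Proof.
exact: (card_pairs_sum n (fun x y =>
  [&& 1 <= x, 1 <= y, x + y <= n, chi x == chi y & chi y == chi (x + y)])).
Qed.

Lemma big_split_nested (N : nat) (F G : nat -> nat -> nat) :
  \sum_(0 <= x < N) \sum_(0 <= y < N) (F x y + G x y)
  = \sum_(0 <= x < N) \sum_(0 <= y < N) F x y
    + \sum_(0 <= x < N) \sum_(0 <= y < N) G x y.
Proof. by rewrite -big_split; apply: eq_bigr => x _; rewrite big_split. Qed.

Lemma bin2_double (m : nat) : 'C(m, 2) + 'C(m, 2) = m * m.-1.
Proof.
rewrite addnn bin2 halfK oddM.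
by case: m => //= m; rewrite andNb subn0.
Qed.

Lemma mono_schur_RBR_split (n s t x y : nat) :
  t <= n -> 2 * s <= t -> n - t <= s ->
  [&& 1 <= x, 1 <= y, x + y <= n,
      RBR_col s t x == RBR_col s t y & RBR_col s t y == RBR_col s t (x + y)]
  = [&& 0 < x, 0 < y & x + y <= s] + [&& s < x, s < y & x + y <= t]
    + [&& 0 < x, t < y & x + y <= n] + [&& t < x, 0 < y & x + y <= n] :> nat.
Proof.
move=> le_tn le_2st le_nts; rewrite /RBR_col.
by case: (leqP x s); case: (ltnP t x); case: (leqP y s); case: (ltnP t y) => /=; lia.
Qed.

Theorem lemma2p1 (n s t : nat) :
  1 <= s -> s <= t -> t <= n -> 2 * s <= t -> n - t <= s ->
  M_nst n s t =
    (s * (s - 1)) %/ 2 + ((t - 2 * s) * (t - 2 * s - 1)) %/ 2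
    + (n - t) * (n - t - 1).
Proof.
move=> _ _ le_tn le_2st le_nts.
rewrite /M_nst num_mono_schur_sum.
under eq_bigr do under eq_bigr do rewrite mono_schur_RBR_split //.
rewrite !big_split_nested !count_triangle; try lia.
rewrite add0n addn0 subn0 addnn -mul2n -addnA bin2_double.
by rewrite !subn1 !divn2 -!bin2.
Qed.
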